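(* Let $\mathcal F$ be a finite set of edge-colored graphs (edge colors $[r]$) such that for every color $i\in[r]$ there exists an $\mathcal F$-safe colored $i$-determiner. Then for every $d\in\mathbb N$ and every $i\in[r]$ there exists an $\mathcal F$-safe $d$-remote colored $i$-determiner.
   Context: Graphs are finite simple undirected. An edge-colored graph is $(G,\gamma)$, $\gamma\colon E(G)\to[r]$. $(G,\gamma)$ is $\mathcal F$-free if there is no $(F,\phi)\in\mathcal F$ and graph homomorphism $h\colon F\to G$ with $\gamma(h(e))=\phi(e)$ for all $e\in E(F)$. A partially edge-colored graph is $(G,\xi)$ with $\xi\colon S\to[r]$, $S=\mathrm{dom}(\xi)\subseteq E(G)$; an extension of $\xi$ is $\gamma\colon E(G)\to[r]$ with $\gamma|_S=\xi$. Gluing: for graphs $G,H$ with pairwise disjoint edges $e_1,\dots,e_k\in E(G)$, $f_1,\dots,f_k\in E(H)$, $G\oplus H$ is obtained from the disjoint union by identifying $e_j$ with $f_j$ for each $j$ (identifying endpoints in some way). $(G,\xi)$ with pairwise disjoint edges $e_1,\dots,e_k\notin\mathrm{dom}(\xi)$ is $\mathcal F$-safe along $e_1,\dots,e_k$ if (a) $\xi$ has an $\mathcal F$-free extension, and (b) for every $\mathcal F$-free $(H,\gamma_H)$ and pairwise disjoint $f_1,\dots,f_k\in E(H)$ such that some $\mathcal F$-free extension $\gamma$ of $\xi$ satisfies $\gamma(e_j)=\gamma_H(f_j)$ for all $j$, and every way of forming $G\oplus H$, the partial coloring $\xi\cup\gamma_H$ of $G\oplus H$ has an $\mathcal F$-free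 extension. $\mathrm{dist}(e,e')$ is the minimum shortest-path distance between an endpoint of $e$ and one of $e'$; $\mathrm{dist}(e,S)=\min_{e'\in S}\mathrm{dist}(e,e')$. A colored $i$-determiner is $(G,\xi,e)$ with $e\in E(G)\setminus\mathrm{dom}(\xi)$ such that (1) one endpoint of $e$ is incident to no edge of $\mathrm{dom}(\xi)$, (2) $\xi$ has an $\mathcal F$-free extension, (3) every $\mathcal F$-free extension $\gamma$ of $\xi$ has $\gamma(e)=i$. It is $d$-remote if $\mathrm{dist}(e,\mathrm{dom}(\xi))\ge d$, and $\mathcal F$-safe if $(G,\xi)$ is $\mathcal F$-safe along $e$. *)

From mathcomp Require Import all_boot.
From Stdlib Require Lists.List.
Set Implicit Arguments.
Unset Strict Implicit.
Unset Printing Implicit Defensive.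

(* Colors [r] = {1,...,r} are represented by 'I_r = {0,...,r-1}. *)

Record graph := Graph {
  gV :> finType;
  gadj : rel gV;
  gsym : symmetric gadj;
  girr : irreflexive gadj }.

(** An edge-colored (finite simple) graph: the coloring is a symmetric
    function on ordered adjacent pairs (values on non-edges are irrelevant). *)
Record cgraph (r : nat) := CGraph {
  cG : graph;
  ccol : cG -> cG -> 'I_r;
  ccolsym : forall x y, gadj x y -> ccol x y = ccol y x }.

Section Defs.
Variable r : nat.

Definition is_coloring (V : finType) (adj : rel V) (col : V -> V -> 'I_r) :=
  forall x y, adj x y -> col x y = col y x.

Definition Ffree (F : seq (cgraph r)) (V : finType) (adj : rel V)
    (col : V -> V -> 'I_r) : Prop :=
  forall Fc : cgraph r, List.In Fc F ->
  forall h : cG Fc -> V,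
    ~ (forall x y : cG Fc, gadj x y ->
         adj (h x) (h y) /\ col (h x) (h y) = ccol x y).

(** Partial coloring: [xi x y = Some c] means the edge xy is in dom(xi)
    with color c; it is symmetric on edges. *)
Definition is_pcoloring (G : graph) (xi : G -> G -> option 'I_r) :=
  forall x y, gadj x y -> xi x y = xi y x.

Definition extends (G : graph) (xi : G -> G -> option 'I_r)
    (gam : G -> G -> 'I_r) :=
  is_coloring (@gadj G) gam /\
  forall x y c, gadj x y -> xi x y = Some c -> gam x y = c.

Definition free_ext (F : seq (cgraph r)) (G : graph)
    (xi : G -> G -> option 'I_r) (gam : G -> G -> 'I_r) :=
  extends xi gam /\ Ffree F (@gadj G) gam.

(** Gluing G and H along the edge (u,v) of G and (a,b) of H, identifying
    a with u and b with v.  (The other identification is obtained from the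
    ordered pair (b,a), and all ordered pairs are quantified over.) *)
Section Glue.
Variables (G H : graph) (u v : G) (a b : H).

Definition gvert : finType := (G + {y : H | (y != a) && (y != b)})%type.

Definition gl_inG (x : G) : gvert := inl x.

Definition gl_inH (y : H) : gvert :=
  match insub y with
  | Some y' => inr y'
  | None => if y == a then inl u else inl v
  end.

Definition gl_adj : rel gvert := fun p q =>
  [exists x : G, exists x' : G,
      [&& gadj x x', gl_inG x == p & gl_inG x' == q]]
  || [exists y : H, exists y' : H,
      [&& gadj y y', gl_inH y == p & gl_inH y' == q]].

End Glue.

(** F-safety of (G, xi) along the edge (u,v) (case k = 1). *)
Definition Fsafe (F : seq (cgraph r)) (G : graph)
    (xi : G -> G -> option 'I_r) (u v : G) : Prop :=
  (exists gam, free_ext F xi gam) /\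
  forall (H : graph) (gH : H -> H -> 'I_r),
    is_coloring (@gadj H) gH -> Ffree F (@gadj H) gH ->
    forall a b : H, gadj a b ->
    (exists gam, free_ext F xi gam /\ gam u v = gH a b) ->
    exists g' : @gvert G H a b -> @gvert G H a b -> 'I_r,
      [/\ is_coloring (@gl_adj G H u v a b) g',
          (forall x x' c, gadj x x' -> xi x x' = Some c ->
              g' (@gl_inG G H a b x) (@gl_inG G H a b x') = c),
          (forall y y', gadj y y' ->
              g' (@gl_inH G H u v a b y) (@gl_inH G H u v a b y') = gH y y') &
          Ffree F (@gl_adj G H u v a b) g'].

Definition determiner (F : seq (cgraph r)) (G : graph)
    (xi : G -> G -> option 'I_r) (u v : G) (i : 'I_r) : Prop :=
  [/\ gadj u v, xi u v = None,
      (exists2 w, (w == u) || (w == v) &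
         forall z, gadj w z -> xi w z = None),
      (exists gam, free_ext F xi gam) &
      (forall gam, free_ext F xi gam -> gam u v = i)].

Fixpoint walk (G : graph) (n : nat) (x y : G) : bool :=
  match n with
  | 0 => x == y
  | n'.+1 => [exists z, gadj x z && walk n' z y]
  end.

(** dist(uv, dom xi) >= d : no endpoint of uv is at shortest-path distance
    < d from an endpoint of an edge of dom(xi). *)
Definition remote (G : graph) (xi : G -> G -> option 'I_r) (u v : G)
    (d : nat) : Prop :=
  forall w z z' n, (w == u) || (w == v) -> gadj z z' -> xi z z' != None ->
    n < d -> ~~ walk n w z.

End Defs.

From mathcomp Require Import all_boot.

Set Implicit Arguments.
Unset Strict Implicit.
Unset Printing Implicit Defensive.

(* If ab is a precolored edge, of color j, of an F-safe i-determiner (G, xi, uv), then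
   replacing its precoloring by an F-safe j-determiner (D, xiD, c1c2) glued along c1c2 = ab
   gives again an F-safe i-determiner: F-free extensions of the new partial coloring restrict
   to F-free extensions on D, which force color j on ab, and hence to F-free extensions on G;
   conversely, safety of D and of G lets one assemble F-free extensions of glued graphs.
   Such a substitution removes ab from the precolored edges near uv, and if D is d-remote
   and a, b differ from u, v, the precolored edges it brings in are at distance > d from uv.
   So one first clears the precolored edges at u and v (gluing onto the endpoint of ab at uv
   the endpoint of c1c2 that meets no precolored edge), and then, by induction on d, uses
   d-remote determiners to clear all precolored edges within distance d of uv. *)

Lemma adj_neq (G : graph) (x y : G) : gadj x y -> x != y.
Proof. by apply: contraTneq => ->; rewrite girr. Qed.

Lemma Ffree_comap r (F : seq (cgraph r)) (V W : finType) (adjV : rel V)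
    (adjW : rel W) (colW : W -> W -> 'I_r) (phi : V -> W) :
  {homo phi : p q / adjV p q >-> adjW p q} ->
  Ffree F adjW colW -> Ffree F adjV (fun p q => colW (phi p) (phi q)).
Proof.
move=> hphi frW Fc inF h hh; apply: (frW Fc inF (phi \o h)) => x y xy.
by have [h1 h2] := hh x y xy; split=> //; apply: hphi.
Qed.

Lemma walk_contract (K L : graph) (pi : K -> L) :
  (forall p q, gadj p q -> pi p = pi q \/ gadj (pi p) (pi q)) ->
  forall n p q, walk n p q -> exists2 m, m <= n & walk m (pi p) (pi q).
Proof.
move=> hpi; elim=> [|n IH] p q /=; first by move=> /eqP ->; exists 0 => //=.
case/existsP => z /andP [hz /IH [m hm hw]].
case: (hpi _ _ hz) => [->|hpz]; first by exists m => //; apply: leqW.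
by exists m.+1 => //=; apply/existsP; exists (pi z); rewrite hpz.
Qed.

Section Glue.
Variables (G H : graph) (u v : G) (a b : H).
Local Notation inH := (@gl_inH G H u v a b).
Local Notation adj := (@gl_adj G H u v a b).

Variant gl_inH_spec (y : H) : (G + {z : H | (z != a) && (z != b)})%type -> Type :=
  | GlInH_a of y = a : gl_inH_spec y (inl u)
  | GlInH_b of y = b & y != a : gl_inH_spec y (inl v)
  | GlInH_other (s : {z : H | (z != a) && (z != b)}) of val s = y & y != a & y != b :
      gl_inH_spec y (inr s).

Lemma gl_inHP y : gl_inH_spec y (inH y).
Proof.
rewrite /gl_inH; case: insubP => [s /andP[ya yb] sy|]; first exact: GlInH_other.
rewrite negb_and !negbK; case: eqP => [->|ya] /= yb; first exact: GlInH_a.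
by rewrite (eqP yb); apply: GlInH_b => //; rewrite -(eqP yb); apply/eqP.
Qed.

Lemma gl_inH_a : inH a = inl u.
Proof. by case: gl_inHP => // [_|s _]; rewrite eqxx. Qed.

Lemma gl_inH_b : a != b -> inH b = inl v.
Proof.
by move=> ab; case: gl_inHP => // [ba|s _ _]; [move: ab; rewrite ba eqxx|rewrite eqxx].
Qed.

Lemma gl_inH_eq_inl y x : inH y = inl x -> (y = a /\ x = u) \/ (y = b /\ x = v).
Proof. by case: gl_inHP => [->[<-]|-> _ [<-]|//]; [left|right]. Qed.

Lemma gl_inH_inj : u != v -> injective inH.
Proof.
move=> uv y1 y2; case: gl_inHP => [->|-> ba|s <- _ _];
  case: gl_inHP => [->|-> ba'|s' <- _ _] //.
- by move=> [] /eqP; rewrite (negbTE uv).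
- by move=> [] /esym /eqP; rewrite (negbTE uv).
- by move=> [->].
Qed.

Lemma gl_adjP p q : reflect
  ((exists x x', [/\ gadj x x', inl x = p & inl x' = q]) \/
   (exists y y', [/\ gadj y y', inH y = p & inH y' = q])) (adj p q).
Proof.
apply: (iffP orP) => [[/existsP[x /existsP[x' /and3P[? /eqP ? /eqP ?]]]|
                       /existsP[y /existsP[y' /and3P[? /eqP ? /eqP ?]]]]|
                      [[x [x' [? ? ?]]]|[y [y' [? ? ?]]]]].
- by left; exists x, x'.
- by right; exists y, y'.
- by left; apply/existsP; exists x; apply/existsP; exists x'; apply/and3P; split=> //; apply/eqP.
- by right; apply/existsP; exists y; apply/existsP; exists y'; apply/and3P; split=> //; apply/eqP.
Qed.

Lemma gl_adj_inG x x' : gadj x x' -> adj (inl x) (inl x').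
Proof. by move=> h; apply/gl_adjP; left; exists x, x'. Qed.

Lemma gl_adj_inH y y' : gadj y y' -> adj (inH y) (inH y').
Proof. by move=> h; apply/gl_adjP; right; exists y, y'. Qed.

Lemma gl_adj_sym : symmetric adj.
Proof.
move=> p q; apply/idP/idP => /gl_adjP [[x [x' [h <- <-]]]|[y [y' [h <- <-]]]];
  by [apply: gl_adj_inG; rewrite gsym | apply: gl_adj_inH; rewrite gsym].
Qed.

Lemma gl_adj_inr_inl s x : adj (inr s) (inl x) -> x = u \/ x = v.
Proof.
case/gl_adjP => [[x1 [x1' [h //]]]|[y [y' [h e e']]]].
by case/gl_inH_eq_inl: e' => [[_ ->]|[_ ->]]; [left|right].
Qed.

Hypothesis huv : gadj u v.

Lemma gl_adj_irr : irreflexive adj.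
Proof.
move=> p; apply/negP => /gl_adjP [[x [x' [h <- [e]]]]|[y [y' [h <- e]]]].
  by move: h; rewrite e girr.
by move: h; rewrite (gl_inH_inj (adj_neq huv) e) girr.
Qed.

Definition glue := Graph gl_adj_sym gl_adj_irr.

End Glue.

Arguments gl_inHP {G H} u v {a b} y.

Lemma Fsafe_determiner_glue r (F : seq (cgraph r)) (D : graph)
    (xiD : D -> D -> option 'I_r) (c1 c2 : D) (j : 'I_r) (K : graph)
    (gK : K -> K -> 'I_r) (p q : K) :
  determiner F xiD c1 c2 j -> Fsafe F xiD c1 c2 ->
  is_coloring (@gadj K) gK -> Ffree F (@gadj K) gK -> gadj p q -> gK p q = j ->
  exists g : @gvert D K p q -> @gvert D K p q -> 'I_r,
    [/\ is_coloring (@gl_adj D K c1 c2 p q) g,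
        (forall x x' c, gadj x x' -> xiD x x' = Some c -> g (inl x) (inl x') = c),
        (forall y y', gadj y y' ->
           g (gl_inH c1 c2 p q y) (gl_inH c1 c2 p q y') = gK y y') &
        Ffree F (@gl_adj D K c1 c2 p q) g].
Proof.
move=> [_ _ _ [gD feD] forced] [_ safeD] colK frK hpq gKpq.
by apply: safeD => //; exists gD; rewrite gKpq forced.
Qed.

Section Reassoc.
Variables (D G H : graph) (c1 c2 : D) (a b u v : G) (a' b' : H).
Hypotheses (hc : gadj c1 c2) (hab : gadj a b) (huv : gadj u v) (hab' : gadj a' b').

Local Notation DG := (glue a b hc).
Local Notation GH := (glue a' b' huv).
Local Notation inH_DG := (@gl_inH D G c1 c2 a b).
Local Notation inH_GH := (@gl_inH G H u v a' b').
Local Notation inH_D_GH := (@gl_inH D GH c1 c2 (gl_inG a' b' a) (gl_inG a' b' b)).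
Local Notation inH_DG_H := (@gl_inH DG H (inH_DG u) (inH_DG v) a' b').

Definition reassoc (p : @gvert DG H a' b') :
    @gvert D GH (gl_inG a' b' a) (gl_inG a' b' b) :=
  match p with
  | inl (inl x) => inl x
  | inl (inr s) => inH_D_GH (inl (val s))
  | inr t => inH_D_GH (inH_GH (val t))
  end.

Lemma reassoc_inH_DG y : reassoc (inl (inH_DG y)) = inH_D_GH (inl y).
Proof.
case: (gl_inHP c1 c2 y) => [->|->|s <- _ _] //=; first by rewrite gl_inH_a.
by rewrite gl_inH_b // (@adj_neq GH _ _ (gl_adj_inG _ _ _ _ hab)).
Qed.

Lemma reassoc_inH t : reassoc (inH_DG_H t) = inH_D_GH (inH_GH t).
Proof.
case: (@gl_inHP DG H (inH_DG u) (inH_DG v) a' b' t) => [->|-> _|s <- _ _] //.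
  by rewrite reassoc_inH_DG gl_inH_a.
by rewrite reassoc_inH_DG gl_inH_b // (adj_neq hab').
Qed.

Lemma reassoc_adj :
  {homo reassoc : p q / @gl_adj DG H (inH_DG u) (inH_DG v) a' b' p q >->
                        @gl_adj D GH c1 c2 (gl_inG a' b' a) (gl_inG a' b' b) p q}.
Proof.
move=> p q /gl_adjP [[n [n' [h <- <-]]]|[t [t' [h <- <-]]]].
  case/gl_adjP: h => [[x [x' [h <- <-]]]|[y [y' [h <- <-]]]]; first exact: gl_adj_inG.
  by rewrite !reassoc_inH_DG; apply/gl_adj_inH/gl_adj_inG.
by rewrite !reassoc_inH; apply/gl_adj_inH/gl_adj_inH.
Qed.

End Reassoc.

Section Substitution.
Variables (r : nat) (D G : graph) (xiD : D -> D -> option 'I_r) (xi : G -> G -> option 'I_r).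
Variables (c1 c2 : D) (a b : G).
Hypotheses (hc : gadj c1 c2) (hab : gadj a b).
Hypotheses (pcD : is_pcoloring xiD) (pcG : is_pcoloring xi).

Local Notation N := (glue a b hc).
Local Notation inH := (@gl_inH D G c1 c2 a b).

(* The edge ab of G becomes the edge c1c2 of D and takes its xiD-status. *)
Definition glue_pcol (p q : @gvert D G a b) : option 'I_r :=
  match p, q with
  | inl x, inl x' => xiD x x'
  | inl x, inr s' =>
      if x == c1 then xi a (val s') else if x == c2 then xi b (val s') else None
  | inr s, inl x' =>
      if x' == c1 then xi (val s) a else if x' == c2 then xi (val s) b else None
  | inr s, inr s' => xi (val s) (val s')
  end.

Local Notation xiN := (glue_pcol : N -> N -> option 'I_r).

Definition on_ab (y y' : G) := ((y == a) && (y' == b)) || ((y == b) && (y' == a)).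

Lemma on_abP y y' : on_ab y y' -> (y = a /\ y' = b) \/ (y = b /\ y' = a).
Proof. by case/orP => /andP[/eqP -> /eqP ->]; [left|right]. Qed.

Lemma glue_pcol_inH y y' : gadj y y' -> ~~ on_ab y y' -> xiN (inH y) (inH y') = xi y y'.
Proof.
have c12 := adj_neq hc; rewrite /on_ab.
case: (gl_inHP c1 c2 y) => [->|-> ya|s <- ya yb];
  case: (gl_inHP c1 c2 y') => [->|-> ya'|s' <- ya' yb'] //=; rewrite ?eqxx ?girr //=.
all: by rewrite ?[c2 == c1]eq_sym ?(negbTE c12) ?orbT ?andbT.
Qed.

Lemma glue_pcol_ab : xiN (inH a) (inH b) = xiD c1 c2 /\ xiN (inH b) (inH a) = xiD c2 c1.
Proof. by rewrite gl_inH_a gl_inH_b // adj_neq. Qed.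

Lemma glue_pcol_sym : is_pcoloring xiN.
Proof.
move=> p q /gl_adjP [[x [x' [h <- <-]]]|[y [y' [h <- <-]]]] /=; first exact: pcD.
have [eab eba] := glue_pcol_ab.
have [/on_abP [[-> ->]|[-> ->]]|nab] := boolP (on_ab y y').
- by rewrite eab eba (pcD hc).
- by rewrite eab eba (pcD hc).
have nab' : ~~ on_ab y' y.
  by apply: contra nab => /on_abP [[-> ->]|[-> ->]]; rewrite /on_ab !eqxx ?orbT.
by rewrite !glue_pcol_inH ?(pcG h) // gsym.
Qed.

Lemma glue_pcolP (p q : N) : gadj p q -> xiN p q != None ->
  (exists x x', [/\ p = inl x, q = inl x', gadj x x' & xiD x x' != None]) \/
  (exists y y', [/\ p = inH y, q = inH y', gadj y y', xi y y' = xiN p q & ~~ on_ab y y']).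
Proof.
case/gl_adjP => [[x [x' [h <- <-]]]|[y [y' [h <- <-]]]]; first by left; exists x, x'.
have [eab eba] := glue_pcol_ab.
have [/on_abP [[-> ->]|[-> ->]]|nab] := boolP (on_ab y y') => nn.
- left; exists c1, c2; rewrite gl_inH_a gl_inH_b ?adj_neq //.
  by split=> //; move: nn; rewrite eab.
- left; exists c2, c1; rewrite gl_inH_a gl_inH_b ?adj_neq // gsym.
  by split=> //; move: nn; rewrite eba.
- by right; exists y, y'; rewrite glue_pcol_inH.
Qed.

Lemma glue_pcol_agree (g : N -> N -> 'I_r) :
  (forall x x' c, gadj x x' -> xiD x x' = Some c -> g (inl x) (inl x') = c) ->
  (forall y y' c, gadj y y' -> xi y y' = Some c -> g (inH y) (inH y') = c) ->
  forall p q c, gadj p q -> xiN p q = Some c -> g p q = c.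
Proof.
move=> agD agG p q c hpq e; have nn : xiN p q != None by rewrite e.
case: (glue_pcolP hpq nn) => [[x [x' [ep eq hx _]]]|[y [y' [ep eq hy e' _]]]]; subst p q.
  exact: agD.
by apply: agG; rewrite // e'.
Qed.

Variables (F : seq (cgraph r)) (i j : 'I_r) (u v : G).
Hypotheses (detG : determiner F xi u v i) (safeG : Fsafe F xi u v).
Hypotheses (xiab : xi a b = Some j).
Hypotheses (detD : determiner F xiD c1 c2 j) (safeD : Fsafe F xiD c1 c2).

Lemma free_ext_glue_D g :
  free_ext F xiN g -> free_ext F xiD (fun x x' => g (inl x) (inl x')).
Proof.
move=> [[col ag] fr]; split; first split.
- by move=> x x' h; apply/col/gl_adj_inG.
- by move=> x x' c h e; apply: ag => //; apply: gl_adj_inG.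
- by apply: Ffree_comap fr => x x'; apply: gl_adj_inG.
Qed.

Lemma free_ext_glue_c1c2 g : free_ext F xiN g -> g (inl c1) (inl c2) = j.
Proof. by move=> /free_ext_glue_D; case: detD => _ _ _ _; apply. Qed.

Lemma free_ext_glue_G g :
  free_ext F xiN g -> free_ext F xi (fun y y' => g (inH y) (inH y')).
Proof.
move=> fe; have gj := free_ext_glue_c1c2 fe; case: fe => [[col ag] fr].
split; first split.
- by move=> y y' h; apply/col/gl_adj_inH.
- move=> y y' c h e; have [/on_abP [[ya yb]|[yb ya]]|nab] := boolP (on_ab y y').
  + by move: e; rewrite ya yb gl_inH_a gl_inH_b ?adj_neq // xiab => -[<-].
  + move: e; rewrite ya yb gl_inH_a gl_inH_b ?adj_neq // -(pcG hab) xiab => -[<-].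
    by rewrite (col (inl c2)) ?gj //; apply: gl_adj_inG; rewrite gsym.
  + by apply: ag; [apply: gl_adj_inH | rewrite glue_pcol_inH].
- by apply: Ffree_comap fr => y y'; apply: gl_adj_inH.
Qed.

Lemma glue_free_ext : exists g, free_ext F xiN g.
Proof.
case: detG => _ _ _ [g0 [[col0 ag0] fr0]] _.
have [g [colg agD agG frg]] := Fsafe_determiner_glue detD safeD col0 fr0 hab (ag0 _ _ _ hab xiab).
exists g; split=> //; split=> //.
by apply: glue_pcol_agree => // y y' c h e; rewrite agG //; apply: ag0.
Qed.

Lemma glue_determiner : determiner F xiN (inH u) (inH v) i.
Proof.
have [huv xuv [w wuv wfree] _ forced] := detG.
have wa : w != a by apply/eqP => wa; move: xiab; rewrite -wa wfree // wa.
have wb : w != b by apply/eqP => wb; move: xiab; rewrite (pcG hab) -wb wfree // wb gsym.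
have nab : ~~ on_ab u v.
  by apply/negP => /on_abP [[eu ev]|[eu ev]]; move: xuv; rewrite eu ev -?(pcG hab) xiab.
split.
- exact: gl_adj_inH.
- by rewrite glue_pcol_inH.
- exists (inH w); first by case/orP: wuv => /eqP ->; rewrite eqxx ?orbT.
  move=> q hq; apply/eqP; apply: contraT => nn.
  case: (glue_pcolP hq nn) => [[x [x' [e _ _ _]]]|[y [y' [e _ h e' _]]]].
    case: (gl_inHP c1 c2 w) e => [wa'|wb' _|s _ _ _] // _.
      by rewrite wa' eqxx in wa.
    by rewrite wb' eqxx in wb.
  by move/(gl_inH_inj (adj_neq hc)): e => wy; move: nn; rewrite -e' -wy wfree ?wy.
- exact: glue_free_ext.
- by move=> g /free_ext_glue_G; apply: forced.
Qed.

(* Extend to G glued with H by safety of G, then to D glued onto that by safety of D,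
   and pull back along [reassoc]. *)
Lemma glue_Fsafe : Fsafe F xiN (inH u) (inH v).
Proof.
split; first exact: glue_free_ext.
move=> H gH colH frH a' b' hab' [g0 [fe0 e0]].
have huv : gadj u v by case: detG.
have [g1 [col1 agG1 agH1 fr1]] :=
  safeG.2 H gH colH frH a' b' hab' (ex_intro _ _ (conj (free_ext_glue_G fe0) e0)).
have [g2 [col2 agD2 agGH2 fr2]] :=
  Fsafe_determiner_glue (K := glue a' b' huv) detD safeD col1 fr1
    (gl_adj_inG _ _ _ _ hab) (agG1 _ _ _ hab xiab).
pose rho : @gvert N H a' b' -> _ := reassoc huv.
have rho_adj := reassoc_adj (hc := hc) hab huv hab'.
exists (fun p q => g2 (rho p) (rho q)); split.
- by move=> p q h; apply/col2/rho_adj.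
- apply: glue_pcol_agree => [x x' c h e|y y' c h e]; first exact: agD2.
  by rewrite /rho !reassoc_inH_DG // agGH2 ?(agG1 _ _ _ h e) //; apply: gl_adj_inG.
- by move=> t t' h; rewrite /rho !reassoc_inH // agGH2 ?agH1 //; apply: gl_adj_inH.
- exact: Ffree_comap rho_adj fr2.
Qed.

End Substitution.

Arguments glue_pcol {r D G} xiD xi c1 c2 {a b}.

Definition close_edges r (K : graph) (xi : K -> K -> option 'I_r) (w1 w2 : K) (k : nat) :
    {set K * K} :=
  [set pq | [&& gadj pq.1 pq.2, xi pq.1 pq.2 != None &
             [exists n : 'I_k, walk n w1 pq.1 || walk n w2 pq.1]]].

Lemma remote_close_edges r (K : graph) (xi : K -> K -> option 'I_r) (w1 w2 : K) k :
  close_edges xi w1 w2 k = set0 -> remote xi w1 w2 k.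
Proof.
move=> ce0 w z z' n hw hz hx hn; apply/negP => hwk.
have : (z, z') \in close_edges xi w1 w2 k.
  rewrite inE /= hz hx; apply/existsP; exists (Ordinal hn) => /=.
  by case/orP: hw => /eqP <-; rewrite hwk ?orbT.
by rewrite ce0 inE.
Qed.

Lemma close_edges1_at r (K : graph) (xi : K -> K -> option 'I_r) (w1 w2 x y : K) :
  gadj x y -> xi x y != None -> (x == w1) || (x == w2) -> (x, y) \in close_edges xi w1 w2 1.
Proof.
move=> hxy nxy xw; rewrite inE /= hxy nxy; apply/existsP; exists ord0.
by rewrite /= ![_ == x]eq_sym.
Qed.

Section GlueWalks.
Variables (r : nat) (D G : graph) (xiD : D -> D -> option 'I_r) (xi : G -> G -> option 'I_r).
Variables (c1 c2 : D) (a b : G).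
Hypotheses (hc : gadj c1 c2) (hab : gadj a b).

Local Notation N := (glue a b hc).
Local Notation inH := (@gl_inH D G c1 c2 a b).
Local Notation xiN := (glue_pcol xiD xi c1 c2 : N -> N -> option 'I_r).

Definition proj_G (p : N) : G :=
  match p with inl x => if x == c2 then b else a | inr s => val s end.
Definition proj_D (p : N) : D := match p with inl x => x | inr _ => c1 end.

Lemma proj_G_inH y : proj_G (inH y) = y.
Proof.
case: (gl_inHP c1 c2 y) => [->|->|s <- _ _] /=; rewrite ?eqxx //.
by rewrite (negbTE (adj_neq hc)).
Qed.

Lemma proj_G_adj p q : gadj p q -> proj_G p = proj_G q \/ gadj (proj_G p) (proj_G q).
Proof.
case/gl_adjP => [[x [x' [h <- <-]]]|[y [y' [h <- <-]]]]; last by rewrite !proj_G_inH; right.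
by rewrite /=; case: (x == c2); case: (x' == c2); [left|right|right|left]; rewrite // gsym.
Qed.

Lemma proj_D_adj p q : gadj p q -> proj_D p = proj_D q \/ gadj (proj_D p) (proj_D q).
Proof.
have proj_D_inH y : proj_D (inH y) = c1 \/ proj_D (inH y) = c2.
  by case: (gl_inHP c1 c2 y) => [_|_ _|s _ _ _] /=; [left|right|left].
case/gl_adjP => [[x [x' [h <- <-]]]|[y [y' [h <- <-]]]]; first by right.
case: (proj_D_inH y) => ->; case: (proj_D_inH y') => ->; [left|right|right|left] => //.
by rewrite gsym.
Qed.

Lemma glue_walk_inr_inl n s x : walk (G := N) n (inr s) (inl x) ->
  exists2 c, (c == c1) || (c == c2) & exists2 m, m < n & walk m c x.
Proof.
elim: n s => [|n IH] s //=; case/existsP => -[x'|s'] /andP [hz hw].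
  have [m hm hw'] := walk_contract proj_D_adj hw.
  by exists x'; [case: (gl_adj_inr_inl hz) => ->; rewrite eqxx ?orbT | exists m].
by have [c hc' [m hm hw']] := IH _ hw; exists c => //; exists m => //; apply: leqW.
Qed.

Lemma glue_walk_remote d t x x' n : remote xiD c1 c2 d -> t != a -> t != b ->
  gadj x x' -> xiD x x' != None -> n <= d -> ~~ walk (G := N) n (inH t) (inl x).
Proof.
move=> remD ta tb hx nx hn; case: (gl_inHP c1 c2 t) => [ta'|tb' _|s _ _ _].
- by rewrite ta' eqxx in ta.
- by rewrite tb' eqxx in tb.
apply/negP => /glue_walk_inr_inl [c hc' [m hm hw]].
by have := remD c x x' m hc' hx nx (leq_trans hm hn); rewrite hw.
Qed.

Variables (u v : G) (k : nat).
Hypothesis far_D : forall t x x' n, (t == u) || (t == v) -> gadj x x' -> xiD x x' != None ->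
  n < k -> ~~ walk (G := N) n (inH t) (inl x).

Lemma glue_close_edges pq : pq \in close_edges xiN (inH u) (inH v) k ->
  exists y y', [/\ pq = (inH y, inH y'), ~~ on_ab a b y y' & (y, y') \in close_edges xi u v k].
Proof.
case: pq => p q; rewrite inE /= => /and3P [hpq nn /existsP [n hw]].
case: (glue_pcolP hab hpq nn) => [[x [x' [ep eq hx nx]]]|[y [y' [ep eq hy e2 nab]]]].
  have [nu nv] : ~~ walk (G := N) n (inH u) (inl x) /\ ~~ walk (G := N) n (inH v) (inl x).
    by split; apply: (far_D _ hx nx (ltn_ord n)); rewrite eqxx ?orbT.
  by move: hw; rewrite ep (negbTE nu) (negbTE nv).
exists y, y'; split; [by rewrite ep eq | exact: nab |].
rewrite inE /= hy e2 nn /=; move: hw; rewrite ep.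
case/orP => /(walk_contract proj_G_adj) [m hm]; rewrite !proj_G_inH => hw;
  by apply/existsP; exists (Ordinal (leq_ltn_trans hm (ltn_ord n))); rewrite /= hw ?orbT.
Qed.

Lemma glue_close_edges0 :
  close_edges xi u v k = set0 -> close_edges xiN (inH u) (inH v) k = set0.
Proof.
move=> ce0; apply/eqP/set0Pn => -[pq /glue_close_edges [y [y' [_ _]]]].
by rewrite ce0 inE.
Qed.

Lemma glue_close_edges_lt :
  ((a, b) \in close_edges xi u v k) || ((b, a) \in close_edges xi u v k) ->
  #|close_edges xiN (inH u) (inH v) k| < #|close_edges xi u v k|.
Proof.
move=> close_ab.
have [e e_close e_ab] : exists2 e, e \in close_edges xi u v k & (e == (a, b)) || (e == (b, a)).
  by case/orP: close_ab => h; [exists (a, b) | exists (b, a)]; rewrite ?eqxx ?orbT.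
pose f (pq : N * N) := (proj_G pq.1, proj_G pq.2).
have f_inj : {in close_edges xiN (inH u) (inH v) k &, injective f}.
  move=> pq1 pq2 /glue_close_edges [y1 [y1' [-> _ _]]] /glue_close_edges [y2 [y2' [-> _ _]]].
  by rewrite /f /= !proj_G_inH => -[-> ->].
rewrite -(card_in_imset f_inj) (cardsD1 e) e_close ltnS.
apply/subset_leq_card/subsetP => _ /imsetP [pq /glue_close_edges [y [y' [-> nab hy]]] ->].
rewrite /f /= !proj_G_inH in_setD1 hy andbT.
by apply: contra nab => /eqP ye; rewrite -ye !xpair_eqE in e_ab.
Qed.

End GlueWalks.

Section Descent.
Variables (r : nat) (P : forall G : graph, (G -> G -> option 'I_r) -> G -> G -> Prop).
Variable m : forall G : graph, (G -> G -> option 'I_r) -> G -> G -> nat.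
Hypothesis step : forall (G : graph) (xi : G -> G -> option 'I_r) (u v : G),
  P xi u v -> 0 < m xi u v ->
  exists (G' : graph) (xi' : G' -> G' -> option 'I_r) (u' v' : G'),
    P xi' u' v' /\ m xi' u' v' < m xi u v.

Lemma descent (G : graph) (xi : G -> G -> option 'I_r) (u v : G) : P xi u v ->
  exists (G' : graph) (xi' : G' -> G' -> option 'I_r) (u' v' : G'),
    P xi' u' v' /\ m xi' u' v' = 0.
Proof.
move: {2}(m xi u v) (leqnn (m xi u v)) => n.
elim: n G xi u v => [|n IH] G xi u v hm hP.
  by exists G, xi, u, v; split => //; apply/eqP; rewrite -leqn0.
have [m0|m_pos] := posnP (m xi u v); first by exists G, xi, u, v.
have [G' [xi' [u' [v' [hP' lt_m]]]]] := step hP m_pos.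
by apply: (IH G' xi' u' v') => //; rewrite -ltnS (leq_trans lt_m hm).
Qed.

End Descent.

Section RemoteDeterminers.
Variables (r : nat) (F : seq (cgraph r)).

Definition safe_determiner (i : 'I_r) (G : graph) (xi : G -> G -> option 'I_r) (u v : G) :=
  [/\ is_pcoloring xi, determiner F xi u v i & Fsafe F xi u v].

Lemma safe_determiner_glue i j (G D : graph) (xi : G -> G -> option 'I_r)
    (xiD : D -> D -> option 'I_r) (u v a b : G) (c1 c2 : D) (hc : gadj c1 c2) (hab : gadj a b) :
  safe_determiner i xi u v -> xi a b = Some j -> safe_determiner j xiD c1 c2 ->
  safe_determiner i (glue_pcol xiD xi c1 c2 : glue a b hc -> glue a b hc -> option 'I_r)
    (gl_inH c1 c2 a b u) (gl_inH c1 c2 a b v).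
Proof.
move=> [pc det safe] xab [pcD detD safeD]; split.
- exact: glue_pcol_sym hab pcD pc.
- exact (glue_determiner hc hab pc det xab detD safeD).
- exact (glue_Fsafe hc hab pc det safe xab detD safeD).
Qed.

Hypothesis safe_determiners : forall j, exists D xiD c1 c2, @safe_determiner j D xiD c1 c2.

Lemma close_edges1_step i (G : graph) (xi : G -> G -> option 'I_r) (u v : G) :
  safe_determiner i xi u v -> 0 < #|close_edges xi u v 1| ->
  exists (G' : graph) (xi' : G' -> G' -> option 'I_r) (u' v' : G'),
    safe_determiner i xi' u' v' /\ #|close_edges xi' u' v' 1| < #|close_edges xi u v 1|.
Proof.
move=> sdG; rewrite card_gt0 => /set0Pn [[z z']].
rewrite inE /= => /and3P [hz nz /existsP [n]]; rewrite (ord1 n) /= => zuv.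
case xz: (xi z z') nz => [j|] // nz.
have [pc [_ _ [w wuv wfree] _ _] _] := sdG.
have zw : z != w by apply/eqP => zw; move: xz; rewrite zw wfree // -zw.
have z'w : z' != w by apply/eqP => z'w; move: xz; rewrite (pc _ _ hz) z'w wfree // -z'w gsym.
have z'_out t : (t == u) || (t == v) -> z' != t.
  move=> tuv; apply/eqP => z't; move: zuv wuv tuv zw z'w (adj_neq hz); rewrite -z't.
  by do 3 case/orP => /eqP ->; rewrite ?eqxx.
have [D [xiD [c1 [c2 sdD]]]] := safe_determiners j.
have [_ [hc _ [wD wDc wDfree] _ _] _] := sdD.
(* Orient zz' so that z is glued to the endpoint wD meeting no precolored edge of D. *)
have [a [b [hab xab close_ab glued]]] : exists a b, [/\ gadj a b, xi a b = Some j,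
    ((a, b) \in close_edges xi u v 1) || ((b, a) \in close_edges xi u v 1) &
    forall t x, (t == u) || (t == v) -> gl_inH c1 c2 a b t = inl x -> x = wD].
  have close_zz' : (z, z') \in close_edges xi u v 1.
    by apply: close_edges1_at; rewrite ?xz // ![z == _]eq_sym.
  case/orP: wDc => /eqP ->.
  - exists z, z'; split; rewrite ?close_zz' // => t x tuv /gl_inH_eq_inl [[_ ->] //|[tz' _]].
    by have := z'_out _ tuv; rewrite tz' eqxx.
  - exists z', z; split; rewrite ?close_zz' ?orbT 1?gsym -1?(pc _ _ hz) //.
    move=> t x tuv /gl_inH_eq_inl [[tz' _]|[_ ->] //].
    by have := z'_out _ tuv; rewrite tz' eqxx.
exists (glue a b hc), (glue_pcol xiD xi c1 c2 : glue a b hc -> glue a b hc -> option 'I_r),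
  (gl_inH c1 c2 a b u), (gl_inH c1 c2 a b v).
split; first exact: safe_determiner_glue sdG xab sdD.
apply: (glue_close_edges_lt (hc := hc) hab _ close_ab) => t x x' m tuv hx nx.
rewrite ltnS leqn0 => /eqP -> /=.
by apply/negP => /eqP /(glued _ _ tuv) exD; move: nx; rewrite exD wDfree // -exD.
Qed.

Lemma close_edges_step d i :
  (forall j, exists D xiD c1 c2, @safe_determiner j D xiD c1 c2 /\ remote xiD c1 c2 d) ->
  forall (G : graph) (xi : G -> G -> option 'I_r) (u v : G),
    safe_determiner i xi u v /\ close_edges xi u v 1 = set0 ->
    0 < #|close_edges xi u v d.+1| ->
  exists (G' : graph) (xi' : G' -> G' -> option 'I_r) (u' v' : G'),
    (safe_determiner i xi' u' v' /\ close_edges xi' u' v' 1 = set0) /\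
    #|close_edges xi' u' v' d.+1| < #|close_edges xi u v d.+1|.
Proof.
move=> remote_dets G xi u v [sdG near0]; rewrite card_gt0 => /set0Pn [[a b] close_ab].
move: (close_ab); rewrite inE /= => /and3P [hab nab _].
case xab: (xi a b) (nab) => [j|] // _.
have [D [xiD [c1 [c2 [sdD remD]]]]] := remote_dets j.
have [pc _ _] := sdG.
have hc : gadj c1 c2 by case: sdD => _ [].
have uv_out t : (t == u) || (t == v) -> (t != a) && (t != b).
  have hba : gadj b a by rewrite gsym.
  have nba : xi b a != None by rewrite -(pc _ _ hab).
  move=> tuv; apply/andP; split; apply/negP => /eqP tE.
    by have := close_edges1_at (w1 := u) (w2 := v) hab nab; rewrite -tE tuv near0 inE => /(_ isT).
  by have := close_edges1_at (w1 := u) (w2 := v) hba nba; rewrite -tE tuv near0 inE => /(_ isT).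
have far t x x' n : (t == u) || (t == v) -> gadj x x' -> xiD x x' != None -> n < d.+1 ->
    ~~ walk (G := glue a b hc) n (gl_inH c1 c2 a b t) (inl x).
  by move=> /uv_out /andP [ta tb] hx nx hn; apply: (glue_walk_remote hc remD ta tb hx nx hn).
exists (glue a b hc), (glue_pcol xiD xi c1 c2 : glue a b hc -> glue a b hc -> option 'I_r),
  (gl_inH c1 c2 a b u), (gl_inH c1 c2 a b v); split; first split.
- exact: safe_determiner_glue sdG xab sdD.
- apply: (glue_close_edges0 hab _ near0) => t x x' n tuv hx nx n0.
  by apply: far tuv hx nx (leq_trans n0 _).
- by apply: (glue_close_edges_lt hab far); rewrite close_ab.
Qed.

Lemma one_remote_safe_determiner i :
  exists (G : graph) (xi : G -> G -> option 'I_r) (u v : G),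
    safe_determiner i xi u v /\ close_edges xi u v 1 = set0.
Proof.
have [G [xi [u [v sdG]]]] := safe_determiners i.
have [G' [xi' [u' [v' [sdG' /cards0_eq ce0]]]]] :=
  descent (@close_edges1_step i) sdG.
by exists G', xi', u', v'.
Qed.

Lemma remote_safe_determiner d i :
  exists (G : graph) (xi : G -> G -> option 'I_r) (u v : G),
    safe_determiner i xi u v /\ remote xi u v d.
Proof.
elim: d i => [|d IH] i.
  by have [G [xi [u [v sdG]]]] := safe_determiners i; exists G, xi, u, v.
have [G [xi [u [v start]]]] := one_remote_safe_determiner i.
have [G' [xi' [u' [v' [[sdG' _] /cards0_eq ce0]]]]] :=
  descent (close_edges_step IH) start.
by exists G', xi', u', v'; split; last exact: remote_close_edges.
Qed.

End RemoteDeterminers.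

Theorem lemma6 (r : nat) (F : seq (cgraph r)) :
  (forall i : 'I_r, exists (G : graph) (xi : G -> G -> option 'I_r) (u v : G),
      [/\ is_pcoloring xi, determiner F xi u v i & Fsafe F xi u v]) ->
  forall (d : nat) (i : 'I_r),
    exists (G : graph) (xi : G -> G -> option 'I_r) (u v : G),
      [/\ is_pcoloring xi, determiner F xi u v i, remote xi u v d
        & Fsafe F xi u v].
Proof.
move=> safe_dets d i.
have [G [xi [u [v [[pc det safe] rem]]]]] := remote_safe_determiner safe_dets d i.
by exists G, xi, u, v.
Qed.
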